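(* Let $\Gamma$ be a geometry of type $C_3$ in which two distinct coplanar lines through a common point lie in a unique common plane. Let $\alpha=(p,L,q,M,p)$ be a non-degenerate primitive path, $N$ a line admissible for $\alpha$, and $r$ a point of $N$. Then: (1) $\sigma^N_{q\to r}(\alpha)=\alpha$ if and only if $r=q$; (2) $\sigma^N_{q\to r}(\alpha)$ is a non-degenerate primitive path and $N$ is admissible for it; (3) $\sigma^N_{r\to q}(\sigma^N_{q\to r}(\alpha))=\alpha$; (4) $\alpha\sim\sigma^N_{q\to r}(\alpha)$.
   Context: A geometry of type $C_3$ is a (residually connected) rank-3 Tits geometry belonging to the diagram $\circ\!-\!\circ\!=\!\circ$, with types points, lines, planes; the residue of a plane is a projective plane on its points and lines. Paths, homotopy $\sim$: generated by $(x,y,x)\leftrightarrow(x)$ and $(x,y,z)\leftrightarrow(x,z)$ for flags $\{x,y,z\}$. A primitive path is a closed path $(p,L,q,M,p)$ with $p,q$ points and $L,M$ lines; degenerate if $p=q$ or $L=M$. Shift: given a non-degenerate primitive path $\alpha=(p,L,q,M,p)$ (so $L,M$ are not coplanar), a line $N$ is admissible for $\alpha$ if $N$ is incident with $q$ and is coplanar with $L$ and with $M$. For a point $r$ on $N$, let $\xi$ be the plane on $N$ and $L$, $\chi$ the plane on $N$ and $M$, $L'$ the line of $\xi$ through $p$ and $r$, $M'$ the line of $\chi$ through $p$ and $r$; the shift of $\alpha$ from $q$ to $r$ along $N$ is $\sigma^N_{q\to r}(\alpha)=(p,L',r,M',p)$. *)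

From Stdlib Require Import List Arith Relations ClassicalEpsilon.
Import ListNotations.
Set Implicit Arguments.

(* A rank-3 incidence geometry over the type set {0,1,2}
   (0 = points, 1 = lines, 2 = planes). *)
Record geometry := {
  ele :> Type;
  typ : ele -> nat;
  inc : ele -> ele -> Prop;
  typ_lt : forall x, typ x < 3;
  inc_refl : forall x, inc x x;
  inc_sym : forall x y, inc x y -> inc y x;
  inc_typ : forall x y, inc x y -> typ x = typ y -> x = y
}.
Arguments typ {g} _.
Arguments inc {g} _ _.

Section Geo.
Context {G : geometry}.

Definition is_point (x : G) := typ x = 0.
Definition is_line (x : G) := typ x = 1.
Definition is_plane (x : G) := typ x = 2.

Definition flag (F : list G) := forall x y, In x F -> In y F -> inc x y.
Definition chamber (F : list G) :=
  flag F /\ forall i, i < 3 -> exists x, In x F /\ typ x = i.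

Definition res (F : list G) (x : G) :=
  (forall y, In y F -> inc x y /\ typ x <> typ y).

Definition res_connected (F : list G) :=
  forall x y, res F x -> res F y ->
    clos_refl_trans G (fun a b => res F a /\ res F b /\ inc a b) x y.

Definition projective_plane (P Ls : G -> Prop) :=
  (forall a b, P a -> P b -> a <> b ->
     exists l, Ls l /\ inc a l /\ inc b l /\
       forall l', Ls l' -> inc a l' -> inc b l' -> l' = l) /\
  (forall l m, Ls l -> Ls m -> l <> m ->
     exists a, P a /\ inc a l /\ inc a m /\
       forall a', P a' -> inc a' l -> inc a' m -> a' = a) /\
  (exists a1 a2 a3 a4, P a1 /\ P a2 /\ P a3 /\ P a4 /\
     forall l, Ls l ->
       ~ (inc a1 l /\ inc a2 l /\ inc a3 l) /\ ~ (inc a1 l /\ inc a2 l /\ inc a4 l) /\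
       ~ (inc a1 l /\ inc a3 l /\ inc a4 l) /\ ~ (inc a2 l /\ inc a3 l /\ inc a4 l)).

Definition gen_quadrangle (P Ls : G -> Prop) :=
  (forall a b l m, P a -> P b -> a <> b -> Ls l -> Ls m ->
     inc a l -> inc b l -> inc a m -> inc b m -> l = m) /\
  (forall a l, P a -> Ls l -> ~ inc a l ->
     exists b m, P b /\ Ls m /\ inc a m /\ inc b m /\ inc b l /\
       forall b' m', P b' -> Ls m' -> inc a m' -> inc b' m' -> inc b' l ->
         b' = b /\ m' = m) /\
  (forall a, P a -> exists l m, Ls l /\ Ls m /\ l <> m /\ inc a l /\ inc a m) /\
  (forall l, Ls l -> exists a b, P a /\ P b /\ a <> b /\ inc a l /\ inc b l).

(* geometry of type C_3 : o - o = o (points - lines = planes) *)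
Definition is_C3 :=
  (forall F, flag F -> exists C, chamber C /\ incl F C) /\
  (* residual connectedness: residues of flags of corank >= 2 are connected *)
  res_connected [] /\ (forall x : G, res_connected [x]) /\
  (forall pi : G, is_plane pi ->
     projective_plane (fun a => is_point a /\ inc a pi)
                      (fun l => is_line l /\ inc l pi)) /\
  (* residue of a line: generalized digon *)
  (forall L a pi : G, is_line L -> is_point a -> is_plane pi ->
     inc a L -> inc pi L -> inc a pi) /\
  (forall p : G, is_point p ->
     gen_quadrangle (fun l => is_line l /\ inc l p)
                    (fun pi => is_plane pi /\ inc pi p)).

Fixpoint is_path (a : list G) : Prop :=
  match a with
  | x :: ((y :: _) as b) => x <> y /\ inc x y /\ is_path b
  | _ => True
  end.

Inductive elem_htpy : list G -> list G -> Prop :=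
| eh_back (a b : list G) (x y : G) :
    elem_htpy (a ++ x :: y :: x :: b) (a ++ x :: b)
| eh_flag (a b : list G) (x y z : G) :
    inc x y -> inc y z -> inc x z ->
    elem_htpy (a ++ x :: y :: z :: b) (a ++ x :: z :: b).

Definition homotopic : list G -> list G -> Prop :=
  clos_refl_sym_trans (list G)
    (fun a b => is_path a /\ is_path b /\ elem_htpy a b).

Definition coplanar (x y : G) := exists xi, is_plane xi /\ inc xi x /\ inc xi y.

Definition primitive (a : list G) :=
  exists p L q M, a = [p; L; q; M; p] /\
    is_point p /\ is_line L /\ is_point q /\ is_line M /\
    is_path a.

Definition nondeg_primitive (a : list G) :=
  exists p L q M, a = [p; L; q; M; p] /\ primitive a /\ p <> q /\ L <> M.

Definition admissible (N : G) (a : list G) :=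
  exists p L q M, a = [p; L; q; M; p] /\
    is_line N /\ inc N q /\ coplanar N L /\ coplanar N M.

Definition plane_on (x y : G) : G :=
  epsilon (inhabits x) (fun xi => is_plane xi /\ inc xi x /\ inc xi y).
Definition line_on (xi a b : G) : G :=
  epsilon (inhabits a) (fun l => is_line l /\ inc l xi /\ inc l a /\ inc l b).

(* shift sigma^N_{q -> r} of (p,L,q,M,p); q is the third entry of the path *)
Definition shift (a : list G) (N r : G) : list G :=
  match a with
  | [p; L; _; M; _] =>
      [p; line_on (plane_on N L) p r; r; line_on (plane_on N M) p r; p]
  | _ => a
  end.

End Geo.
Arguments is_C3 G : clear implicits.

(* L and M are not coplanar (two points p, q of a plane span only one line), hence N differs
   from both; the plane xi on N and L and the plane chi on N and M both contain p, q and r,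
   and L', M' are the lines of xi, chi joining p and r.  If L' = M' then xi and chi
   would be two planes on the distinct lines N and L' through r, contradicting the hypothesis;
   shifting back, the plane on N and L' is xi again, whose line through p and q is L.  For the
   homotopy, insert the detour (q, N, r, N, q) into alpha and contract the triangles p, q, r in
   xi and r, q, p in chi, each of which is homotopic to its third side via the plane. *)

From Stdlib Require Import List Relations ClassicalEpsilon.
Import ListNotations.
Set Implicit Arguments.

Lemma typ_neq {G : geometry} (x y : G) : typ x <> typ y -> x <> y.
Proof. intros Hxy E; subst; auto. Qed.

Ltac distinct_types :=
  apply typ_neq; unfold is_point, is_line, is_plane in *; congruence.
Ltac incident := first [assumption | apply inc_sym; assumption].
Ltac solve_flag :=
  let x := fresh "x" in let y := fresh "y" in
  let Hx := fresh "Hx" in let Hy := fresh "Hy" in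
  intros x y Hx Hy; simpl in Hx, Hy;
  repeat match goal with H : _ \/ _ |- _ => destruct H as [H | H] end;
  try contradiction; subst x y; first [apply inc_refl | incident].

Section Homotopy.
Context {G : geometry}.
Implicit Types (A B : list G) (x y z : G).

Lemma is_path_app_cons A B x :
  is_path (A ++ x :: B) <-> is_path (A ++ [x]) /\ is_path (x :: B).
Proof.
  induction A as [|y [|z A] IH]; simpl.
  - tauto.
  - tauto.
  - simpl in IH; rewrite IH; tauto.
Qed.

Lemma is_path_snoc A x y :
  is_path (A ++ [x]) -> x <> y -> inc x y -> is_path ((A ++ [x]) ++ [y]).
Proof.
  intros HA Hxy Ixy; rewrite <- app_assoc; apply is_path_app_cons; simpl; tauto.
Qed.

Lemma homotopic_backtrack A B x y :
  x <> y -> inc x y -> is_path (A ++ [x]) -> is_path (x :: B) ->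
  homotopic (A ++ x :: y :: x :: B) (A ++ x :: B).
Proof.
  intros Hxy Ixy HA HB; apply rst_step; split; [|split].
  - apply is_path_app_cons; simpl; repeat split; auto using inc_sym, not_eq_sym.
  - apply is_path_app_cons; auto.
  - apply eh_back.
Qed.

Lemma homotopic_flag_move A B x y z :
  x <> y -> y <> z -> x <> z -> flag [x; y; z] ->
  is_path (A ++ [x]) -> is_path (z :: B) ->
  homotopic (A ++ x :: y :: z :: B) (A ++ x :: z :: B).
Proof.
  intros Hxy Hyz Hxz F HA HB; apply rst_step; split; [|split].
  - apply is_path_app_cons; simpl; repeat split; auto; apply F; simpl; auto.
  - apply is_path_app_cons; simpl; repeat split; auto; apply F; simpl; auto.
  - apply eh_flag; apply F; simpl; auto.
Qed.

Lemma homotopic_flag_swap A B a l xi b :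
  is_point a -> is_line l -> is_plane xi -> is_point b ->
  flag [a; l; xi] -> flag [l; xi; b] ->
  is_path (A ++ [a]) -> is_path (b :: B) ->
  homotopic (A ++ a :: l :: b :: B) (A ++ a :: xi :: b :: B).
Proof.
  intros Ha Hl Hxi Hb Fa Fb HA HB.
  apply rst_trans with (A ++ a :: l :: xi :: b :: B).
  - apply rst_sym.
    change (A ++ a :: l :: xi :: b :: B) with (A ++ [a] ++ l :: xi :: b :: B).
    change (A ++ a :: l :: b :: B) with (A ++ [a] ++ l :: b :: B).
    rewrite !app_assoc.
    apply homotopic_flag_move; try distinct_types; try assumption.
    apply is_path_snoc; [assumption | distinct_types | apply Fa; simpl; tauto].
  - apply homotopic_flag_move; try distinct_types; try assumption.
    simpl; repeat split; [distinct_types | apply Fb; simpl; tauto | assumption].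
Qed.

(* a l b m c ~ a xi b xi c ~ a xi c ~ a n c *)
Lemma homotopic_triangle A B xi a l b m c n :
  is_plane xi -> is_point a -> is_point b -> is_point c ->
  is_line l -> is_line m -> is_line n ->
  flag [a; l; xi] -> flag [l; xi; b] -> flag [b; m; xi] -> flag [m; xi; c] ->
  flag [a; n; xi] -> flag [n; xi; c] ->
  is_path (A ++ [a]) -> is_path (c :: B) ->
  homotopic (A ++ a :: l :: b :: m :: c :: B) (A ++ a :: n :: c :: B).
Proof.
  intros Hxi Ha Hb Hc Hl Hm Hn Fal Flb Fbm Fmc Fan Fnc HA HB.
  assert (HAxi : is_path ((A ++ [a]) ++ [xi])).
  { apply is_path_snoc; [assumption | distinct_types | apply Fal; simpl; tauto]. }
  assert (Hxic : is_path (xi :: c :: B)).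
  { simpl; repeat split; [distinct_types | apply Fmc; simpl; tauto | assumption]. }
  apply rst_trans with (A ++ a :: xi :: b :: m :: c :: B).
  { apply homotopic_flag_swap; auto.
    simpl; repeat split;
      first [assumption | distinct_types | apply Fbm; simpl; tauto | apply Fmc; simpl; tauto]. }
  apply rst_trans with (A ++ a :: xi :: b :: xi :: c :: B).
  { change (A ++ a :: xi :: b :: m :: c :: B) with (A ++ [a] ++ [xi] ++ b :: m :: c :: B).
    change (A ++ a :: xi :: b :: xi :: c :: B) with (A ++ [a] ++ [xi] ++ b :: xi :: c :: B).
    rewrite !app_assoc.
    apply homotopic_flag_swap; auto.
    apply is_path_snoc; [assumption | distinct_types | apply Flb; simpl; tauto]. }
  apply rst_trans with (A ++ a :: xi :: c :: B).
  { change (A ++ a :: xi :: b :: xi :: c :: B) with (A ++ [a] ++ xi :: b :: xi :: c :: B).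
    change (A ++ a :: xi :: c :: B) with (A ++ [a] ++ xi :: c :: B).
    rewrite !app_assoc.
    apply homotopic_backtrack; auto; [distinct_types | apply Flb; simpl; tauto]. }
  apply rst_sym, homotopic_flag_swap; auto.
Qed.
End Homotopy.

Section Shapes.
Context {G : geometry}.

Lemma nondeg_primitive_iff (p L q M : G) :
  nondeg_primitive [p; L; q; M; p] <->
  is_point p /\ is_line L /\ is_point q /\ is_line M /\
  inc p L /\ inc q L /\ inc q M /\ inc p M /\ p <> q /\ L <> M.
Proof.
  split.
  - intros (p' & L' & q' & M' & E & (p1 & L1 & q1 & M1 & E1 & Hp & HL & Hq & HM & Hpath) & Hpq & HLM).
    injection E as <- <- <- <-; injection E1 as <- <- <- <-.
    simpl in Hpath; intuition auto using inc_sym.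
  - intros (Hp & HL & Hq & HM & HpL & HqL & HqM & HpM & Hpq & HLM).
    exists p, L, q, M; repeat split; auto.
    exists p, L, q, M; repeat split; simpl; repeat split;
      first [assumption | distinct_types | incident].
Qed.

Lemma admissible_iff (N p L q M : G) :
  admissible N [p; L; q; M; p] <->
  is_line N /\ inc q N /\ coplanar N L /\ coplanar N M.
Proof.
  split.
  - intros (p' & L' & q' & M' & E & HN & HqN & HNL & HNM).
    injection E as <- <- <- <-; auto using inc_sym.
  - intros (HN & HqN & HNL & HNM); exists p, L, q, M; auto using inc_sym.
Qed.

Lemma plane_on_spec (x y : G) :
  coplanar x y -> is_plane (plane_on x y) /\ inc (plane_on x y) x /\ inc (plane_on x y) y.
Proof. intros H; unfold plane_on; apply epsilon_spec, H. Qed.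

Lemma line_on_spec (xi a b : G) :
  (exists l, is_line l /\ inc l xi /\ inc l a /\ inc l b) ->
  is_line (line_on xi a b) /\ inc (line_on xi a b) xi /\
  inc (line_on xi a b) a /\ inc (line_on xi a b) b.
Proof. intros H; unfold line_on; apply epsilon_spec, H. Qed.

End Shapes.

Section PlaneGeometry.
Context {G : geometry}.

Hypothesis plane_residue : forall pi : G, is_plane pi ->
  projective_plane (fun a => is_point a /\ inc a pi) (fun l => is_line l /\ inc l pi).
Hypothesis line_residue : forall L a pi : G, is_line L -> is_point a -> is_plane pi ->
  inc a L -> inc pi L -> inc a pi.
Hypothesis plane_of_lines_unique : forall (p L M xi xi' : G),
  is_point p -> is_line L -> is_line M -> L <> M -> inc p L -> inc p M ->
  is_plane xi -> inc xi L -> inc xi M ->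
  is_plane xi' -> inc xi' L -> inc xi' M -> xi = xi'.

Lemma line_in_plane_unique (pi a b l l' : G) :
  is_plane pi -> is_point a -> is_point b -> a <> b -> inc a pi -> inc b pi ->
  is_line l -> inc l pi -> inc a l -> inc b l ->
  is_line l' -> inc l' pi -> inc a l' -> inc b l' -> l = l'.
Proof.
  intros Hpi Ha Hb Hab Iapi Ibpi Hl Ilpi Ial Ibl Hl' Il'pi Ial' Ibl'.
  destruct (plane_residue Hpi) as [Hlines _].
  destruct (Hlines a b) as (m & _ & _ & _ & Hm); auto.
  rewrite (Hm l), (Hm l'); auto using inc_sym.
Qed.

Lemma line_on_in_plane (pi a b : G) :
  is_plane pi -> is_point a -> is_point b -> a <> b -> inc a pi -> inc b pi ->
  is_line (line_on pi a b) /\ inc (line_on pi a b) pi /\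
  inc (line_on pi a b) a /\ inc (line_on pi a b) b.
Proof.
  intros Hpi Ha Hb Hab Iapi Ibpi; apply line_on_spec.
  destruct (plane_residue Hpi) as [Hlines _].
  destruct (Hlines a b) as (l & [Hl Ilpi] & Ial & Ibl & _); auto.
  exists l; auto using inc_sym.
Qed.

Lemma line_on_eq (pi a b l : G) :
  is_plane pi -> is_point a -> is_point b -> a <> b -> inc a pi -> inc b pi ->
  is_line l -> inc l pi -> inc l a -> inc l b -> line_on pi a b = l.
Proof.
  intros Hpi Ha Hb Hab Iapi Ibpi Hl Ilpi Ila Ilb.
  destruct (line_on_in_plane Hpi Ha Hb Hab Iapi Ibpi) as (Hl' & Il'pi & Il'a & Il'b).
  apply (line_in_plane_unique Hpi Ha Hb Hab); auto using inc_sym.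
Qed.

Lemma plane_on_eq (r N K xi : G) :
  is_point r -> is_line N -> is_line K -> N <> K -> inc r N -> inc r K ->
  is_plane xi -> inc xi N -> inc xi K -> plane_on N K = xi.
Proof.
  intros Hr HN HK HNK IrN IrK Hxi IxiN IxiK.
  assert (Hcop : coplanar N K) by (exists xi; auto).
  destruct (plane_on_spec Hcop) as (Hpl & IplN & IplK).
  apply (plane_of_lines_unique Hr HN HK HNK); auto.
Qed.

Section Shift.
Variables (p L q M N r : G).
Hypotheses (Hp : is_point p) (HL : is_line L) (Hq : is_point q) (HM : is_line M)
  (IpL : inc p L) (IqL : inc q L) (IqM : inc q M) (IpM : inc p M)
  (Hpq : p <> q) (HLM : L <> M)
  (HN : is_line N) (IqN : inc q N) (HNL : coplanar N L) (HNM : coplanar N M)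
  (Hr : is_point r) (IrN : inc r N).

Local Notation xi := (plane_on N L).
Local Notation chi := (plane_on N M).
Local Notation L' := (line_on xi p r).
Local Notation M' := (line_on chi p r).

Lemma lines_not_coplanar : ~ coplanar L M.
Proof.
  intros (pi & Hpi & IpiL & IpiM); apply HLM.
  apply (line_in_plane_unique Hpi Hp Hq Hpq); eauto using inc_sym.
Qed.

Lemma N_neq_L : N <> L.
Proof. intros ->; exact (lines_not_coplanar HNM). Qed.

Lemma N_neq_M : N <> M.
Proof.
  intros ->; apply lines_not_coplanar.
  destruct HNL as (pi & ? & ? & ?); exists pi; auto.
Qed.

Lemma points_on_xi : is_plane xi /\ inc xi N /\ inc xi L /\ inc p xi /\ inc q xi /\ inc r xi.
Proof.
  destruct (plane_on_spec HNL) as (Hxi & IxiN & IxiL).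
  repeat split; auto; [apply (line_residue HL) | apply (line_residue HL) | apply (line_residue HN)];
    auto using inc_sym.
Qed.

Lemma points_on_chi : is_plane chi /\ inc chi N /\ inc chi M /\ inc p chi /\ inc q chi /\ inc r chi.
Proof.
  destruct (plane_on_spec HNM) as (Hchi & IchiN & IchiM).
  repeat split; auto; [apply (line_residue HM) | apply (line_residue HM) | apply (line_residue HN)];
    auto using inc_sym.
Qed.

Lemma p_neq_r : p <> r.
Proof.
  intros E; apply N_neq_L.
  destruct points_on_xi as (Hxi & IxiN & IxiL & Ipxi & Iqxi & _).
  apply (line_in_plane_unique Hxi Hp Hq Hpq); auto using inc_sym.
  rewrite E; assumption.
Qed.

Lemma shifted_line_L : is_line L' /\ inc L' xi /\ inc L' p /\ inc L' r.
Proof.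
  destruct points_on_xi as (Hxi & _ & _ & Ipxi & _ & Irxi).
  exact (line_on_in_plane Hxi Hp Hr p_neq_r Ipxi Irxi).
Qed.

Lemma shifted_line_M : is_line M' /\ inc M' chi /\ inc M' p /\ inc M' r.
Proof.
  destruct points_on_chi as (Hchi & _ & _ & Ipchi & _ & Irchi).
  exact (line_on_in_plane Hchi Hp Hr p_neq_r Ipchi Irchi).
Qed.

Lemma shifted_line_L_neq_N : L' <> N.
Proof.
  intros E; apply N_neq_L.
  destruct points_on_xi as (Hxi & IxiN & IxiL & Ipxi & Iqxi & _).
  destruct shifted_line_L as (_ & _ & IL'p & _).
  apply (line_in_plane_unique Hxi Hp Hq Hpq); auto using inc_sym.
  rewrite <- E; auto using inc_sym.
Qed.

Lemma shifted_line_M_neq_N : M' <> N.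
Proof.
  intros E; apply N_neq_M.
  destruct points_on_chi as (Hchi & IchiN & IchiM & Ipchi & Iqchi & _).
  destruct shifted_line_M as (_ & _ & IM'p & _).
  apply (line_in_plane_unique Hchi Hp Hq Hpq); auto using inc_sym.
  rewrite <- E; auto using inc_sym.
Qed.

Lemma plane_on_shifted_line_L : plane_on N L' = xi.
Proof.
  destruct points_on_xi as (Hxi & IxiN & _).
  destruct shifted_line_L as (HL' & IL'xi & _ & IL'r).
  apply (plane_on_eq Hr HN HL'); auto using inc_sym, not_eq_sym, shifted_line_L_neq_N.
Qed.

Lemma plane_on_shifted_line_M : plane_on N M' = chi.
Proof.
  destruct points_on_chi as (Hchi & IchiN & _).
  destruct shifted_line_M as (HM' & IM'chi & _ & IM'r).
  apply (plane_on_eq Hr HN HM'); auto using inc_sym, not_eq_sym, shifted_line_M_neq_N.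
Qed.

(* If L' = M', the planes xi and chi both contain the distinct lines N and L' through r. *)
Lemma shifted_lines_neq : L' <> M'.
Proof.
  intros E; apply lines_not_coplanar.
  destruct points_on_chi as (_ & _ & IchiM & _).
  exists chi; split; [apply points_on_chi | split; auto].
  rewrite <- plane_on_shifted_line_M, <- E, plane_on_shifted_line_L.
  apply points_on_xi.
Qed.

Lemma line_on_xi_p_q : line_on xi p q = L.
Proof.
  destruct points_on_xi as (Hxi & _ & IxiL & Ipxi & Iqxi & _).
  apply (line_on_eq Hxi Hp Hq Hpq); auto using inc_sym.
Qed.

Lemma line_on_chi_p_q : line_on chi p q = M.
Proof.
  destruct points_on_chi as (Hchi & _ & IchiM & Ipchi & Iqchi & _).
  apply (line_on_eq Hchi Hp Hq Hpq); auto using inc_sym.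
Qed.

Lemma shift_fixed_iff : shift [p; L; q; M; p] N r = [p; L; q; M; p] <-> r = q.
Proof.
  simpl; split.
  - intros E; injection E; auto.
  - intros E; rewrite E, line_on_xi_p_q, line_on_chi_p_q; reflexivity.
Qed.

Lemma shift_nondeg_primitive : nondeg_primitive (shift [p; L; q; M; p] N r).
Proof.
  destruct shifted_line_L as (HL' & _ & IL'p & IL'r).
  destruct shifted_line_M as (HM' & _ & IM'p & IM'r).
  apply nondeg_primitive_iff; auto 10 using inc_sym, p_neq_r, shifted_lines_neq.
Qed.

Lemma shift_admissible : admissible N (shift [p; L; q; M; p] N r).
Proof.
  destruct points_on_xi as (Hxi & IxiN & _).
  destruct points_on_chi as (Hchi & IchiN & _).
  destruct shifted_line_L as (_ & IL'xi & _).
  destruct shifted_line_M as (_ & IM'chi & _).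
  apply admissible_iff; repeat split; auto.
  - exists xi; auto using inc_sym.
  - exists chi; auto using inc_sym.
Qed.

Lemma shift_shift_back : shift (shift [p; L; q; M; p] N r) N q = [p; L; q; M; p].
Proof.
  simpl; rewrite plane_on_shifted_line_L, plane_on_shifted_line_M.
  rewrite line_on_xi_p_q, line_on_chi_p_q; reflexivity.
Qed.

Ltac solve_path := simpl; repeat split; first [assumption | distinct_types | incident].

Lemma shift_homotopic : homotopic [p; L; q; M; p] (shift [p; L; q; M; p] N r).
Proof.
  destruct points_on_xi as (Hxi & IxiN & IxiL & Ipxi & Iqxi & Irxi).
  destruct points_on_chi as (Hchi & IchiN & IchiM & Ipchi & Iqchi & Irchi).
  destruct shifted_line_L as (HL' & IL'xi & IL'p & IL'r).
  destruct shifted_line_M as (HM' & IM'chi & IM'p & IM'r).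
  apply rst_trans with [p; L; q; N; q; M; p].
  { apply rst_sym, (homotopic_backtrack [p; L] [M; p]); solve_path. }
  apply rst_trans with [p; L; q; N; r; N; q; M; p].
  { apply rst_sym, (homotopic_backtrack [p; L; q] [q; M; p]); solve_path. }
  apply rst_trans with [p; L'; r; N; q; M; p].
  { apply (homotopic_triangle [] [N; q; M; p] (xi := xi));
      first [solve_flag | solve_path]. }
  apply (homotopic_triangle [p; L'] [] (xi := chi));
    first [solve_flag | solve_path].
Qed.

End Shift.
End PlaneGeometry.

Theorem mainTheorem10 (G : geometry) (HC3 : is_C3 G)
  (Huniq : forall (p L M xi xi' : G),
     is_point p -> is_line L -> is_line M -> L <> M -> inc p L -> inc p M ->
     is_plane xi -> inc xi L -> inc xi M ->
     is_plane xi' -> inc xi' L -> inc xi' M -> xi = xi')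
  (p L q M N r : G)
  (Halpha : nondeg_primitive [p; L; q; M; p])
  (HN : admissible N [p; L; q; M; p])
  (Hr : is_point r) (HrN : inc r N) :
  let alpha := [p; L; q; M; p] in
  (shift alpha N r = alpha <-> r = q) /\
  (nondeg_primitive (shift alpha N r) /\ admissible N (shift alpha N r)) /\
  shift (shift alpha N r) N q = alpha /\
  homotopic alpha (shift alpha N r).
Proof.
  destruct HC3 as (_ & _ & _ & Hplanes & Hlines & _).
  apply nondeg_primitive_iff in Halpha
    as (Hp & HL & Hq & HM & IpL & IqL & IqM & IpM & Hpq & HLM).
  apply admissible_iff in HN as (HNl & IqN & HNL & HNM).
  cbv zeta; split; [| split; [split | split]].
  - eapply shift_fixed_iff; eassumption.
  - eapply shift_nondeg_primitive; eassumption.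
  - eapply shift_admissible; eassumption.
  - eapply shift_shift_back; eassumption.
  - eapply shift_homotopic; eassumption.
Qed.
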